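(* Let $(\mathcal{E},\mathcal{L},\mathcal{B})$ be a weakly left resolving labelled space whose accommodating family $\mathcal{B}$ is closed under relative complements, and let $S$ be its associated inverse semigroup. A filter in $E(S)$ of infinite type is tight if and only if it is an ultrafilter.
   Context: A directed graph $\mathcal{E}=(\mathcal{E}^0,\mathcal{E}^1,r,s)$ has countable nonempty vertex set, edge set, range/source maps; paths satisfy $r(\lambda_i)=s(\lambda_{i+1})$. A labelled graph has a surjective labelling $\mathcal{L}:\mathcal{E}^1\to\mathcal{A}$ extended letterwise to finite and infinite paths. $\omega$ is the empty word, $\mathcal{L}^+=\bigcup_{n\ge1}\mathcal{L}(\mathcal{E}^n)$, $\mathcal{L}^*=\{\omega\}\cup\mathcal{L}^+$, $\mathcal{L}^\infty$ the labels of infinite paths. For $A\subseteq\mathcal{E}^0$, $\alpha\in\mathcal{L}^+$: $r(A,\alpha)=\{r(\lambda):\mathcal{L}(\lambda)=\alpha,\ s(\lambda)\in A\}$, $r(A,\omega)=A$, $r(\alpha)=r(\mathcal{E}^0,\alpha)$. $\mathcal{B}$ accommodating: closed under $r(\cdot,\alpha)$, finite intersections and unions, contains $r(\alpha)$ for $\alpha\in\mathcal{L}^+$; labelled space weakly left resolving if $r(A\cap B,\alpha)=r(A,\alpha)\cap r(B,\alpha)$ for $A,B\in\mathcal{B}$, $\alpha\in\mathcal{L}^+$. $\mathcal{B}_\alpha=\mathcal{B}\cap\mathcal{P}(r(\alpha))$. $S$ = triples $(\alpha,A,\beta)$, $\alpha,\beta\in\mathcal{L}^*$, $\emptyset\ne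 A\in\mathcal{B}_\alpha\cap\mathcal{B}_\beta$, plus $0$; product $(\alpha,A,\beta)(\gamma,B,\delta)=(\alpha\gamma',r(A,\gamma')\cap B,\delta)$ if $\gamma=\beta\gamma'$, $=(\alpha,A\cap r(B,\beta'),\delta\beta')$ if $\beta=\gamma\beta'$, $=0$ otherwise (empty middle entry identified with $0$). $E(S)=\{(\alpha,A,\alpha)\}\cup\{0\}$, $p\le q$ iff $pq=p$. A filter in a poset with least element $0$ is a nonempty upward-closed subset not containing $0$ in which any two elements have a common lower bound in it; an ultrafilter is a maximal filter. The words of elements of a filter $\xi$ in $E(S)$ are pairwise comparable; $\xi$ is of infinite type if there is no longest such word. For $x\in E(S)$, $Z\subseteq\{y:y\le x\}$ is a cover for $x$ if for every nonzero $y\le x$ there is $z\in Z$ with $zy\neq0$; a filter $\xi$ is tight if for every $x\in\xi$ and every finite cover $Z$ of $x$, $Z\cap\xi\neq\emptyset$. *)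

From Stdlib Require Import List Classical ClassicalEpsilon.
Import ListNotations.
Set Implicit Arguments.

Section LabelledSpace.
Context {V E Alph : Type} (rg src : E -> V) (L : E -> Alph).

Fixpoint path_from (v : V) (p : list E) (w : V) : Prop :=
  match p with
  | nil => v = w
  | e :: p' => src e = v /\ path_from (rg e) p' w
  end.

(* r(A, alpha); for alpha = omega (nil) this is A itself. *)
Definition rrel (A : V -> Prop) (alpha : list Alph) : V -> Prop :=
  fun w => exists v p, A v /\ path_from v p w /\ map L p = alpha.

Definition rword (alpha : list Alph) : V -> Prop := rrel (fun _ => True) alpha.

Definition Lplus (alpha : list Alph) : Prop :=
  alpha <> nil /\ exists v p w, path_from v p w /\ map L p = alpha.

Definition Lstar (alpha : list Alph) : Prop := alpha = nil \/ Lplus alpha.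

Definition setI (X Y : V -> Prop) : V -> Prop := fun v => X v /\ Y v.
Definition setU (X Y : V -> Prop) : V -> Prop := fun v => X v \/ Y v.
Definition setD (X Y : V -> Prop) : V -> Prop := fun v => X v /\ ~ Y v.
Definition subset (X Y : V -> Prop) : Prop := forall v, X v -> Y v.
Definition nonempty (X : V -> Prop) : Prop := exists v, X v.

Variable B : (V -> Prop) -> Prop.

Definition accommodating : Prop :=
  (forall X alpha, B X -> Lplus alpha -> B (rrel X alpha)) /\
  (forall X Y, B X -> B Y -> B (setI X Y)) /\
  (forall X Y, B X -> B Y -> B (setU X Y)) /\
  (forall alpha, Lplus alpha -> B (rword alpha)).

Definition weakly_left_resolving : Prop :=
  forall X Y alpha, B X -> B Y -> Lplus alpha ->
    rrel (setI X Y) alpha = setI (rrel X alpha) (rrel Y alpha).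

Definition closed_under_relative_complements : Prop :=
  forall X Y, B X -> B Y -> B (setD X Y).

Definition Balpha (alpha : list Alph) (X : V -> Prop) : Prop :=
  B X /\ subset X (rword alpha).

(* Raw elements of the semigroup S; membership is the predicate inS. *)
Inductive Sg : Type :=
| Zero : Sg
| Tri : list Alph -> (V -> Prop) -> list Alph -> Sg.

Definition inS (x : Sg) : Prop :=
  match x with
  | Zero => True
  | Tri a X b => Lstar a /\ Lstar b /\ nonempty X /\ Balpha a X /\ Balpha b X
  end.

(* a triple with empty middle entry is identified with 0 *)
Definition mk (a : list Alph) (X : V -> Prop) (b : list Alph) : Sg :=
  if excluded_middle_informative (nonempty X) then Tri a X b else Zero.

Definition mul (x y : Sg) : Sg :=
  match x, y with
  | Tri a X b, Tri c Y d =>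
      if excluded_middle_informative (exists c', c = b ++ c') then
        let c' := skipn (length b) c in mk (a ++ c') (setI (rrel X c') Y) d
      else if excluded_middle_informative (exists b', b = c ++ b') then
        let b' := skipn (length c) b in mk a (setI X (rrel Y b')) (d ++ b')
      else Zero
  | _, _ => Zero
  end.

Definition inES (x : Sg) : Prop :=
  inS x /\ (x = Zero \/ exists a X, x = Tri a X a).

Definition leS (x y : Sg) : Prop := mul x y = x.

Definition is_filter (xi : Sg -> Prop) : Prop :=
  (forall x, xi x -> inES x) /\
  (exists x, xi x) /\
  (forall x y, xi x -> inES y -> leS x y -> xi y) /\
  ~ xi Zero /\
  (forall x y, xi x -> xi y -> exists z, xi z /\ leS z x /\ leS z y).

Definition is_ultrafilter (xi : Sg -> Prop) : Prop :=
  is_filter xi /\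
  forall eta, is_filter eta -> (forall x, xi x -> eta x) -> forall x, eta x -> xi x.

Definition word (x : Sg) : list Alph :=
  match x with Zero => nil | Tri a _ _ => a end.

Definition infinite_type (xi : Sg -> Prop) : Prop :=
  forall x, xi x -> exists y, xi y /\ length (word x) < length (word y).

Definition is_cover (x : Sg) (Z : list Sg) : Prop :=
  (forall z, In z Z -> inES z /\ leS z x) /\
  (forall y, inES y -> y <> Zero -> leS y x ->
     exists z, In z Z /\ mul z y <> Zero).

Definition is_tight (xi : Sg -> Prop) : Prop :=
  is_filter xi /\
  forall x Z, xi x -> is_cover x Z -> exists z, In z Z /\ xi z.

End LabelledSpace.

Definition countable (T : Type) : Prop :=
  exists f : T -> nat, forall x y, f x = f y -> x = y.

(** The product of E(S) is the meet: (α,A,α) ≤ (β,B,β) iff α = βα' and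
    A ⊆ r(B,α'), and (α,A,α)(β,B,β) is the greatest common lower bound.  In a
    meet-semilattice with zero, a filter ξ is an ultrafilter iff every e ∉ ξ
    is orthogonal to some y ∈ ξ, and such a filter is tight: if a finite cover
    of x ∈ ξ missed ξ, a single w ∈ ξ below x would be orthogonal to the whole
    cover.  Conversely, let ξ be tight of infinite type and e = (β,B,β) ∉ ξ.
    Pick (α,A,α) ∈ ξ with |α| ≥ |β|.  If β is not a prefix of α the two are
    orthogonal.  Otherwise α = βγ, and A = (A ∩ r(B,γ)) ∪ (A ∖ r(B,γ)), both
    pieces lying in ℬ by closure under relative complements, gives a cover of
    (α,A,α) by two idempotents.  By tightness one piece lies in ξ; the first is
    below e, so it must be the second, which is orthogonal to e. *)

From Stdlib Require Import Arith Lia List Classical ClassicalEpsilon FunctionalExtensionality PropExtensionality.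

Section IdempotentSemilattice.
Context {V E Alph : Type} (rg src : E -> V) (L : E -> Alph) (B : (V -> Prop) -> Prop).

Local Notation r := (rrel rg src L).
Local Notation S := (@Sg V Alph).
Local Notation "x ⋅ y" := (mul rg src L x y) (at level 40, left associativity).
Local Notation "x ≤ y" := (leS rg src L x y) (at level 70).
Local Notation IE := (inES rg src L B).

Lemma pred_ext (X Y : V -> Prop) : (forall v, X v <-> Y v) -> X = Y.
Proof.
  intro H; apply functional_extensionality; intro v.
  apply propositional_extensionality; auto.
Qed.

Lemma setI_comm (X Y : V -> Prop) : setI X Y = setI Y X.
Proof. apply pred_ext; unfold setI; tauto. Qed.

Lemma setI_eq_l (X Y : V -> Prop) : subset X Y -> setI X Y = X.
Proof. intro H; apply pred_ext; unfold setI; firstorder. Qed.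

Lemma app_eq_self_nil (a c : list Alph) : a = a ++ c -> c = nil.
Proof. intro H; symmetry; apply (app_inv_head a); rewrite app_nil_r; auto. Qed.

Lemma path_from_app v p1 p2 w :
  path_from rg src v (p1 ++ p2) w <->
  exists u, path_from rg src v p1 u /\ path_from rg src u p2 w.
Proof.
  revert v; induction p1 as [|e p1 IH]; intro v; simpl.
  - split; [eauto | intros [u [-> H]]; auto].
  - rewrite IH; firstorder.
Qed.

Lemma rrel_nil (X : V -> Prop) : r X nil = X.
Proof.
  apply pred_ext; intro w; split.
  - intros [v [[|e p] [Hv [Hp Hm]]]]; [simpl in Hp; subst; auto | discriminate].
  - intro H; exists w, nil; simpl; auto.
Qed.

Lemma rrel_app (X : V -> Prop) c d : r X (c ++ d) = r (r X c) d.
Proof.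
  apply pred_ext; intro w; split.
  - intros [v [p [Hv [Hp Hm]]]].
    destruct (map_eq_app _ _ _ _ Hm) as [p1 [p2 [-> [H1 H2]]]].
    apply path_from_app in Hp as [u [Hp1 Hp2]].
    exists u, p2; split; auto; exists v, p1; auto.
  - intros [u [p2 [[v [p1 [Hv [Hp1 Hm1]]]] [Hp2 Hm2]]]].
    exists v, (p1 ++ p2); repeat split; auto.
    + apply path_from_app; eauto.
    + rewrite map_app; congruence.
Qed.

Lemma rrel_mono (X Y : V -> Prop) c : subset X Y -> subset (r X c) (r Y c).
Proof. intros H w [v [p [Hv Hp]]]; exists v, p; auto. Qed.

Lemma rrel_split (X W1 W2 : V -> Prop) c w :
  subset X (setU W1 W2) -> r X c w -> r W1 c w \/ r W2 c w.
Proof.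
  intros H [v [p [Hv Hp]]].
  destruct (H v Hv); [left | right]; exists v, p; auto.
Qed.

Lemma nonempty_of_rrel (X : V -> Prop) c w : r X c w -> nonempty X.
Proof. intros [v [p [Hv _]]]; exists v; auto. Qed.

Lemma Lstar_of_rrel (X : V -> Prop) c w : r X c w -> Lstar rg src L c.
Proof.
  intros [v [p [_ [Hp Hm]]]].
  destruct c as [|x c]; [left; auto | right].
  split; [discriminate | exists v, p, w; auto].
Qed.

Definition idem_triple (a : list Alph) (X : V -> Prop) : Prop :=
  Lstar rg src L a /\ nonempty X /\ B X /\ subset X (rword rg src L a).

Lemma Lstar_suffix a c X : idem_triple (a ++ c) X -> Lstar rg src L c.
Proof.
  intros [_ [[v Hv] [_ HX]]].
  apply (Lstar_of_rrel (rword rg src L a) c v).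
  unfold rword; rewrite <- rrel_app; apply HX; auto.
Qed.

Lemma inES_Zero : IE (Zero : S).
Proof. split; [exact I | left; reflexivity]. Qed.

Lemma inES_Tri a X : idem_triple a X -> IE (Tri a X a).
Proof. intros [Ha [HX [HB Hs]]]; split; [repeat split; auto | right; eauto]. Qed.

Lemma inES_cases (x : S) :
  IE x -> x = Zero \/ exists a X, x = Tri a X a /\ idem_triple a X.
Proof.
  intros [Hs [->|[a [X ->]]]]; [left; auto | right].
  destruct Hs as [Ha [_ [HX [[HB Hsub] _]]]].
  exists a, X; repeat split; auto.
Qed.

Lemma mk_nonempty (a : list Alph) (W : V -> Prop) b : nonempty W -> mk a W b = Tri a W b.
Proof. unfold mk; intro H; destruct (excluded_middle_informative _); tauto. Qed.

Lemma mk_empty (a : list Alph) (W : V -> Prop) b : ~ nonempty W -> mk a W b = Zero.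
Proof. unfold mk; intro H; destruct (excluded_middle_informative _); tauto. Qed.

Lemma inES_mk a W : Lstar rg src L a -> B W -> subset W (rword rg src L a) -> IE (mk a W a).
Proof.
  intros Ha HB Hs; destruct (classic (nonempty W)) as [HW|HW].
  - rewrite mk_nonempty by auto; apply inES_Tri; repeat split; auto.
  - rewrite mk_empty by auto; apply inES_Zero.
Qed.

Lemma mul_Zero_r (x : S) : x ⋅ Zero = Zero.
Proof. destruct x; reflexivity. Qed.

Lemma mul_prefix a c X Y :
  Tri a X a ⋅ Tri (a ++ c) Y (a ++ c) = mk (a ++ c) (setI (r X c) Y) (a ++ c).
Proof.
  unfold mul; destruct (excluded_middle_informative _) as [_|H]; [|exfalso; eauto].
  cbv zeta; rewrite skipn_app, skipn_all, Nat.sub_diag; reflexivity.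
Qed.

Lemma mul_extension a c X Y :
  Tri (a ++ c) Y (a ++ c) ⋅ Tri a X a = mk (a ++ c) (setI (r X c) Y) (a ++ c).
Proof.
  unfold mul; destruct (excluded_middle_informative _) as [[c' Hc']|_].
  - rewrite <- app_assoc in Hc'; apply app_eq_self_nil, app_eq_nil in Hc' as [-> ->].
    cbv zeta; rewrite !app_nil_r, skipn_all, app_nil_r, !rrel_nil, setI_comm; reflexivity.
  - destruct (excluded_middle_informative _) as [_|H]; [|exfalso; eauto].
    cbv zeta; rewrite skipn_app, skipn_all, Nat.sub_diag, setI_comm; reflexivity.
Qed.

Lemma mul_incomparable a b X Y :
  ~ (exists c, b = a ++ c) -> ~ (exists c, a = b ++ c) -> Tri a X a ⋅ Tri b Y b = Zero.
Proof.
  intros H1 H2; unfold mul.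
  destruct (excluded_middle_informative _); [contradiction|].
  destruct (excluded_middle_informative _); [contradiction | reflexivity].
Qed.

Lemma mul_comm_Tri a b X Y : Tri a X a ⋅ Tri b Y b = Tri b Y b ⋅ Tri a X a.
Proof.
  destruct (classic (exists c, b = a ++ c)) as [[c ->]|H1].
  { rewrite mul_prefix, mul_extension; reflexivity. }
  destruct (classic (exists c, a = b ++ c)) as [[c ->]|H2].
  { rewrite mul_prefix, mul_extension; reflexivity. }
  rewrite !mul_incomparable; auto.
Qed.

Lemma mul_comm x y : IE x -> IE y -> x ⋅ y = y ⋅ x.
Proof.
  intros Hx Hy.
  destruct (inES_cases x Hx) as [->|[a [X [-> _]]]]; [rewrite mul_Zero_r; reflexivity|].
  destruct (inES_cases y Hy) as [->|[b [Y [-> _]]]]; [reflexivity|].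
  apply mul_comm_Tri.
Qed.

Lemma le_Tri a b (X Y : V -> Prop) : nonempty X ->
  (Tri a X a ≤ Tri b Y b <-> exists d, a = b ++ d /\ subset X (r Y d)).
Proof.
  intro HX; unfold leS.
  destruct (classic (exists c, b = a ++ c)) as [[c ->]|H1].
  { rewrite mul_prefix; split.
    - intro H; destruct (classic (nonempty (setI (r X c) Y))) as [HW|HW];
        [rewrite mk_nonempty in H by auto | rewrite mk_empty in H by auto; discriminate].
      injection H as Hc HXY; symmetry in Hc; apply app_eq_self_nil in Hc; subst c.
      exists nil; rewrite !app_nil_r, rrel_nil; split; auto.
      rewrite <- HXY, rrel_nil; intros v [_ Hv]; auto.
    - intros [d [Hd Hs]]; rewrite <- app_assoc in Hd.
      apply app_eq_self_nil, app_eq_nil in Hd as [-> ->].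
      rewrite app_nil_r, rrel_nil in *; rewrite setI_eq_l, mk_nonempty; auto. }
  destruct (classic (exists c, a = b ++ c)) as [[c ->]|H2].
  { rewrite mul_extension; split.
    - intro H; destruct (classic (nonempty (setI (r Y c) X))) as [HW|HW];
        [rewrite mk_nonempty in H by auto | rewrite mk_empty in H by auto; discriminate].
      injection H as HYX; exists c; split; auto.
      rewrite <- HYX; intros v [Hv _]; auto.
    - intros [d [Hd Hs]]; apply app_inv_head in Hd; subst d.
      rewrite setI_comm, setI_eq_l, mk_nonempty; auto. }
  rewrite mul_incomparable by auto; split; [discriminate | firstorder].
Qed.

Lemma Zero_le (x : S) : Zero ≤ x.
Proof. reflexivity. Qed.

Lemma le_Zero (x : S) : x ≤ Zero -> x = Zero.
Proof. unfold leS; rewrite mul_Zero_r; auto. Qed.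

Lemma mk_le a b d (W Y : V -> Prop) :
  a = b ++ d -> subset W (r Y d) -> mk a W a ≤ Tri b Y b.
Proof.
  intros Ha Hs; destruct (classic (nonempty W)) as [HW|HW].
  - rewrite mk_nonempty by auto; apply le_Tri; eauto.
  - rewrite mk_empty by auto; apply Zero_le.
Qed.

Lemma le_refl x : IE x -> x ≤ x.
Proof.
  intro Hx; destruct (inES_cases x Hx) as [->|[a [X [-> [_ [HX _]]]]]]; [apply Zero_le|].
  rewrite <- (mk_nonempty a X a) at 1 by auto.
  apply (mk_le a a nil); [rewrite app_nil_r | rewrite rrel_nil; intros v]; auto.
Qed.

Lemma le_trans x y z : IE x -> IE y -> IE z -> x ≤ y -> y ≤ z -> x ≤ z.
Proof.
  intros Hx Hy Hz Hxy Hyz.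
  destruct (inES_cases x Hx) as [->|[a [X [-> [_ [HX _]]]]]]; [apply Zero_le|].
  destruct (inES_cases y Hy) as [->|[b [Y [-> [_ [HY _]]]]]];
    [apply le_Zero in Hxy; discriminate|].
  destruct (inES_cases z Hz) as [->|[c [Z [-> _]]]];
    [apply le_Zero in Hyz; discriminate|].
  apply le_Tri in Hxy as [d1 [-> S1]]; auto.
  apply le_Tri in Hyz as [d2 [-> S2]]; auto.
  apply le_Tri; auto; exists (d2 ++ d1); split; [symmetry; apply app_assoc|].
  rewrite rrel_app; intros v Hv; apply (rrel_mono Y); auto.
Qed.


Lemma mk_mul_nonzero a e (W Z : V -> Prop) v :
  r W e v -> Z v -> mk a W a ⋅ Tri (a ++ e) Z (a ++ e) <> Zero.
Proof.
  intros HW HZ; rewrite mk_nonempty by exact (nonempty_of_rrel _ _ _ HW).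
  rewrite mul_prefix, mk_nonempty; [discriminate | exists v; split; auto].
Qed.

Lemma cover_split a (X W1 W2 : V -> Prop) : idem_triple a X -> B W1 -> B W2 ->
  subset W1 X -> subset W2 X -> subset X (setU W1 W2) ->
  is_cover rg src L B (Tri a X a) (mk a W1 a :: mk a W2 a :: nil).
Proof.
  intros [Ha [_ [_ HX]]] B1 B2 S1 S2 HXW; split.
  - intros z [<-|[<-|[]]];
      (split; [apply inES_mk | apply (mk_le _ _ nil); [rewrite app_nil_r | rewrite rrel_nil]]);
      auto; intros v Hv; auto.
  - intros g Hg Hg0 Hle.
    destruct (inES_cases g Hg) as [->|[d [Z [-> [_ [[v Hv] _]]]]]]; [contradiction|].
    apply le_Tri in Hle as [e [-> HZ]]; [|exists v; auto].
    destruct (rrel_split _ _ _ _ _ HXW (HZ v Hv)) as [H|H];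
      [exists (mk a W1 a) | exists (mk a W2 a)]; split; simpl; eauto using mk_mul_nonzero.
Qed.

Lemma mul_le_l x y : IE x -> IE y -> x ⋅ y ≤ x.
Proof.
  intros Hx Hy.
  destruct (inES_cases x Hx) as [->|[a [X [-> _]]]]; [apply Zero_le|].
  destruct (inES_cases y Hy) as [->|[b [Y [-> _]]]]; [apply Zero_le|].
  destruct (classic (exists c, b = a ++ c)) as [[c ->]|H1].
  { rewrite mul_prefix; apply (mk_le _ _ c); [reflexivity | intros v [Hv _]; auto]. }
  destruct (classic (exists c, a = b ++ c)) as [[c ->]|H2].
  { rewrite mul_extension; apply (mk_le _ _ nil);
      [rewrite app_nil_r | rewrite rrel_nil; intros v [_ Hv]]; auto. }
  rewrite mul_incomparable by auto; apply Zero_le.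
Qed.

Lemma mul_le_r x y : IE x -> IE y -> x ⋅ y ≤ y.
Proof. intros Hx Hy; rewrite mul_comm by auto; apply mul_le_l; auto. Qed.

Section Meet.
Hypothesis hacc : accommodating rg src L B.
Hypothesis hwlr : weakly_left_resolving rg src L B.

Lemma B_setI (X Y : V -> Prop) : B X -> B Y -> B (setI X Y).
Proof. apply hacc. Qed.

Lemma B_rrel (X : V -> Prop) c : B X -> Lstar rg src L c -> B (r X c).
Proof. intros HX [->|Hc]; [rewrite rrel_nil | apply hacc]; auto. Qed.

Lemma rrel_setI (X Y : V -> Prop) c : B X -> B Y -> Lstar rg src L c ->
  r (setI X Y) c = setI (r X c) (r Y c).
Proof.
  intros HX HY [->|Hc]; [rewrite !rrel_nil; reflexivity | apply hwlr; auto].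
Qed.

Lemma inES_mk_prefix a c (X Y : V -> Prop) : idem_triple a X -> idem_triple (a ++ c) Y ->
  IE (mk (a ++ c) (setI (r X c) Y) (a ++ c)).
Proof.
  intros [_ [_ [BX _]]] HY.
  pose proof (Lstar_suffix _ _ _ HY) as Hc.
  destruct HY as [Ha [_ [BY SY]]].
  apply inES_mk; auto.
  - apply B_setI; auto; apply B_rrel; auto.
  - intros v [_ Hv]; auto.
Qed.

Lemma inES_mul x y : IE x -> IE y -> IE (x ⋅ y).
Proof.
  intros Hx Hy.
  destruct (inES_cases x Hx) as [->|[a [X [-> HX]]]]; [apply inES_Zero|].
  destruct (inES_cases y Hy) as [->|[b [Y [-> HY]]]];
    [rewrite mul_Zero_r; apply inES_Zero|].
  destruct (classic (exists c, b = a ++ c)) as [[c ->]|H1].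
  { rewrite mul_prefix; apply inES_mk_prefix; auto. }
  destruct (classic (exists c, a = b ++ c)) as [[c ->]|H2].
  { rewrite mul_extension; apply inES_mk_prefix; auto. }
  rewrite mul_incomparable by auto; apply inES_Zero.
Qed.

Lemma le_mk_prefix d a c (Z X Y : V -> Prop) : B X -> B Y -> nonempty Z ->
  Tri d Z d ≤ Tri a X a -> Tri d Z d ≤ Tri (a ++ c) Y (a ++ c) ->
  Tri d Z d ≤ mk (a ++ c) (setI (r X c) Y) (a ++ c).
Proof.
  intros BX BY [z Hz] H1 H2.
  apply le_Tri in H1 as [e1 [Hd1 S1]]; [|exists z; auto].
  apply le_Tri in H2 as [e2 [Hd2 S2]]; [|exists z; auto].
  assert (e1 = c ++ e2) as ->
    by (apply (app_inv_head a); rewrite <- Hd1, Hd2, app_assoc; reflexivity).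
  assert (HW : subset Z (r (setI (r X c) Y) e2)).
  { intros v Hv; pose proof (S1 v Hv) as HXv; rewrite rrel_app in HXv.
    destruct (nonempty_of_rrel _ _ _ HXv) as [u Hu].
    rewrite rrel_setI; [split; auto | | auto | eauto using Lstar_of_rrel].
    apply B_rrel; eauto using Lstar_of_rrel. }
  rewrite mk_nonempty by exact (nonempty_of_rrel _ _ _ (HW z Hz)).
  apply le_Tri; [exists z; auto | exists e2; split; auto].
Qed.

Lemma le_mul g x y : IE g -> IE x -> IE y -> g ≤ x -> g ≤ y -> g ≤ x ⋅ y.
Proof.
  intros Hg Hx Hy H1 H2.
  destruct (inES_cases g Hg) as [->|[d [Z [-> [_ [HZ _]]]]]]; [apply Zero_le|].
  destruct (inES_cases x Hx) as [->|[a [X [-> [_ [_ [BX _]]]]]]];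
    [apply le_Zero in H1; discriminate|].
  destruct (inES_cases y Hy) as [->|[b [Y [-> [_ [_ [BY _]]]]]]];
    [apply le_Zero in H2; discriminate|].
  pose proof (proj1 (le_Tri _ _ _ _ HZ) H1) as [e1 [Hd1 _]].
  pose proof (proj1 (le_Tri _ _ _ _ HZ) H2) as [e2 [Hd2 _]].
  rewrite Hd1 in Hd2; destruct (app_eq_app _ _ _ _ Hd2) as [c [[-> _]|[-> _]]].
  - rewrite mul_comm_Tri, mul_prefix; apply le_mk_prefix; auto.
  - rewrite mul_prefix; apply le_mk_prefix; auto.
Qed.

Lemma mul_mono_l w y z : IE w -> IE y -> IE z -> w ≤ y -> w ⋅ z ≤ y ⋅ z.
Proof.
  intros Hw Hy Hz H; apply le_mul; auto using inES_mul, mul_le_r.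
  apply (le_trans _ w); auto using inES_mul, mul_le_l.
Qed.

Lemma mul_eq_Zero_of_le w y z : IE w -> IE y -> IE z ->
  w ≤ y -> y ⋅ z = Zero -> w ⋅ z = Zero.
Proof. intros Hw Hy Hz H Hyz; apply le_Zero; rewrite <- Hyz; apply mul_mono_l; auto. Qed.


Definition complement_orthogonal (xi : S -> Prop) : Prop :=
  forall e, IE e -> ~ xi e -> exists y, xi y /\ y ⋅ e = Zero.

Lemma filter_inES xi x : is_filter rg src L B xi -> xi x -> IE x.
Proof. intros hxi; apply hxi. Qed.

Lemma filter_not_Zero xi : is_filter rg src L B xi -> ~ xi Zero.
Proof. intros hxi; apply hxi. Qed.

Lemma filter_up xi x y : is_filter rg src L B xi -> xi x -> IE y -> x ≤ y -> xi y.
Proof. intros hxi; apply hxi. Qed.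

Lemma filter_mul xi x y : is_filter rg src L B xi -> xi x -> xi y -> xi (x ⋅ y).
Proof.
  intros hxi Hx Hy.
  destruct (proj2 (proj2 (proj2 (proj2 hxi))) x y Hx Hy) as [z [Hz [Hzx Hzy]]].
  apply (filter_up _ z); eauto using inES_mul, filter_inES.
  apply le_mul; eauto using filter_inES.
Qed.

Lemma ultrafilter_of_complement_orthogonal xi : is_filter rg src L B xi ->
  complement_orthogonal xi -> is_ultrafilter rg src L B xi.
Proof.
  intros hxi Horth; split; auto.
  intros eta Heta Hsub e He; apply NNPP; intro Hne.
  destruct (Horth e (filter_inES _ _ Heta He) Hne) as [y [Hy Hye]].
  apply (filter_not_Zero _ Heta); rewrite <- Hye; apply filter_mul; auto.
Qed.

Section Filter.
Variable xi : S -> Prop.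
Hypothesis hxi : is_filter rg src L B xi.

Lemma filter_adjoin z : IE z -> (forall y, xi y -> y ⋅ z <> Zero) ->
  is_filter rg src L B (fun u => IE u /\ exists y, xi y /\ y ⋅ z ≤ u).
Proof.
  intros Hz Hmeet.
  assert (Hin : forall y, xi y -> IE y) by (intros y; apply filter_inES; auto).
  split; [intros u [Hu _]; auto | split; [|split; [|split]]].
  - destruct hxi as (_ & [x Hx] & _).
    exists (x ⋅ z); split; [|exists x; split]; auto using inES_mul, le_refl.
  - intros u u' [Hu [y [Hy Hyu]]] Hu' Huu'; split; auto.
    exists y; split; auto; apply (le_trans _ u); auto using inES_mul.
  - intros [_ [y [Hy Hy0]]]; apply (Hmeet y Hy), le_Zero; auto.
  - intros u1 u2 [Hu1 [y1 [Hy1 H1]]] [Hu2 [y2 [Hy2 H2]]].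
    assert (Hy : xi (y1 ⋅ y2)) by (apply filter_mul; auto).
    exists ((y1 ⋅ y2) ⋅ z); split; [split; [|exists (y1 ⋅ y2); split]|split];
      auto using inES_mul, le_refl.
    + apply (le_trans _ (y1 ⋅ z)); auto using inES_mul, mul_mono_l, mul_le_l.
    + apply (le_trans _ (y2 ⋅ z)); auto using inES_mul, mul_mono_l, mul_le_r.
Qed.

Lemma ultrafilter_complement_orthogonal :
  is_ultrafilter rg src L B xi -> complement_orthogonal xi.
Proof.
  intros [_ Hmax] e He Hne; apply NNPP; intro Hno.
  assert (Hmeet : forall y, xi y -> y ⋅ e <> Zero) by (intros y Hy Hye; apply Hno; eauto).
  apply Hne, (Hmax _ (filter_adjoin e He Hmeet)).
  - intros y Hy; split; [apply (filter_inES xi); auto|].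
    exists y; split; auto; apply mul_le_l; auto; apply (filter_inES xi); auto.
  - destruct hxi as (_ & [y Hy] & _).
    split; auto; exists y; split; auto; apply mul_le_r; auto; apply (filter_inES xi); auto.
Qed.

Lemma filter_orthogonal_list x (Zs : list S) : xi x ->
  (forall z, In z Zs -> IE z /\ exists y, xi y /\ y ⋅ z = Zero) ->
  exists w, xi w /\ w ≤ x /\ forall z, In z Zs -> w ⋅ z = Zero.
Proof.
  assert (Hin : forall y, xi y -> IE y) by (intros y; apply filter_inES; auto).
  intros Hx; induction Zs as [|z Zs IH]; intros HZ.
  - exists x; split; [|split]; auto using le_refl; intros z [].
  - destruct IH as [w [Hw [Hwx Hw0]]]; [intros z' Hz'; apply HZ; right; auto|].
    destruct (HZ z (or_introl eq_refl)) as [Hz [y [Hy Hyz]]].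
    exists (w ⋅ y); split; [apply filter_mul; auto | split].
    + apply (le_trans _ w); auto using inES_mul, mul_le_l.
    + intros z' [<-|Hz'].
      * apply (mul_eq_Zero_of_le _ y); auto using inES_mul, mul_le_r.
      * apply (mul_eq_Zero_of_le _ w); auto using inES_mul, mul_le_l.
        apply HZ; right; auto.
Qed.

Lemma tight_of_complement_orthogonal :
  complement_orthogonal xi -> is_tight rg src L B xi.
Proof.
  intros Horth; split; auto.
  intros x Zs Hx [HZle HZmeet]; apply NNPP; intro Hnone.
  destruct (filter_orthogonal_list x Zs Hx) as [w [Hw [Hwx Hw0]]].
  { intros z Hz; split; [apply HZle; auto|].
    apply Horth; [apply HZle; auto | intro; apply Hnone; eauto]. }
  assert (Hw1 : IE w) by (apply (filter_inES xi); auto).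
  destruct (HZmeet w Hw1) as [z [Hz Hzw]]; auto.
  { intros ->; apply (filter_not_Zero xi); auto. }
  apply Hzw; rewrite mul_comm; auto; apply HZle; auto.
Qed.

Lemma filter_long_word : infinite_type xi ->
  forall n, exists y, xi y /\ n <= length (word y).
Proof.
  intros hinf n; induction n as [|n [y [Hy Hn]]].
  - destruct hxi as (_ & [x Hx] & _); exists x; split; [auto | lia].
  - destruct (hinf y Hy) as [y' [Hy' Hl]]; exists y'; split; [auto | lia].
Qed.
Hypothesis hcompl : closed_under_relative_complements B.

Lemma tight_complement_orthogonal :
  is_tight rg src L B xi -> infinite_type xi -> complement_orthogonal xi.
Proof.
  intros [_ Htight] hinf e He Hne.
  destruct (inES_cases e He) as [->|[b [Y [-> HY]]]].
  { destruct hxi as (_ & [x Hx] & _); exists x; split; [auto | apply mul_Zero_r]. }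
  destruct (filter_long_word hinf (length b)) as [y [Hy Hlen]].
  destruct (inES_cases y (filter_inES _ _ hxi Hy)) as [->|[a [X [-> HX]]]];
    [exfalso; apply (filter_not_Zero xi); auto|].
  simpl in Hlen.
  destruct (classic (exists c, a = b ++ c)) as [[c ->]|Hnp].
  2:{ exists (Tri a X a); split; auto; apply mul_incomparable; auto.
      intros [c Hc]; apply Hnp; exists nil; subst b.
      rewrite length_app in Hlen; destruct c; [rewrite !app_nil_r | simpl in Hlen; lia]; auto. }
  set (R := r Y c).
  assert (BR : B R) by (apply B_rrel; [apply HY | eapply Lstar_suffix; eauto]).
  pose proof HX as (_ & _ & BX & _).
  destruct (Htight _ (mk (b ++ c) (setI X R) (b ++ c) :: mk (b ++ c) (setD X R) (b ++ c) :: nil) Hy)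
    as [z [Hz Hxz]].
  { apply cover_split; auto using B_setI.
    - intros v [Hv _]; auto.
    - intros v [Hv _]; auto.
    - intros v Hv; destruct (classic (R v)); [left | right]; split; auto. }
  destruct Hz as [<-|[<-|[]]].
  - exfalso; apply Hne, (filter_up _ _ _ hxi Hxz); [apply inES_Tri; auto|].
    apply (mk_le _ _ c); [reflexivity | intros v [_ Hv]; auto].
  - exists (mk (b ++ c) (setD X R) (b ++ c)); split; auto.
    destruct (classic (nonempty (setD X R))) as [HW|HW]; [|rewrite mk_empty; auto].
    rewrite mk_nonempty, mul_extension, mk_empty; auto.
    intros [v [Hv [_ Hv']]]; contradiction.
Qed.
End Filter.

End Meet.
End IdempotentSemilattice.

Theorem mainTheorem16
  (V E Alph : Type) (rg src : E -> V) (L : E -> Alph)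
  (B : (V -> Prop) -> Prop)
  (hVc : countable V) (hVne : inhabited V) (hEc : countable E)
  (hL : forall a : Alph, exists e : E, L e = a)
  (hacc : accommodating rg src L B)
  (hwlr : weakly_left_resolving rg src L B)
  (hcompl : closed_under_relative_complements B)
  (xi : @Sg V Alph -> Prop)
  (hxi : is_filter rg src L B xi)
  (hinf : infinite_type xi) :
  is_tight rg src L B xi <-> is_ultrafilter rg src L B xi.
Proof.
  (* Countability of the graph and surjectivity of the labelling are standing
     assumptions of the paper; the argument does not need them. *)
  split; intro H.
  - apply ultrafilter_of_complement_orthogonal; auto.
    apply tight_complement_orthogonal; auto.
  - apply tight_of_complement_orthogonal; auto.
    apply ultrafilter_complement_orthogonal; auto.
Qed.
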